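(* Let $x$ be an indeterminate and let $m,n$ be positive integers with $m\geq n$. Then, as an identity of rational functions in $x$ over $\mathbb{Q}$, \begin{multline*} \sum_{k=0}^{n} \binom{m+k}{k} \binom{m}{k} \binom{n+k}{k} \binom{n}{k} \Biggl\{ \frac{-k}{(x+k)^2} + \frac{1+k \bigl(H_{m+k}^{(1)} +H_{m-k}^{(1)} + H_{n+k}^{(1)} + H_{n-k}^{(1)} -4H_k^{(1)}\bigr)}{x+k} \Biggr\} \\ +\sum_{k=n+1}^{m} \frac{(-1)^{k-n}}{x+k} \binom{m+k}{k} \binom{m}{k} \binom{n+k}{k} \Big/ \binom{k-1}{n} =\frac{x\, (1-x)_{n}\, (1-x)_{m}}{(x)_{n+1}\, (x)_{m+1}}. \end{multline*}
   Context: For non-negative integers $i$ and $n$, the generalized harmonic sum is $H^{(i)}_{n}:=\sum_{j=1}^{n} j^{-i}$ for $n\ge 1$, and $H^{(i)}_{0}:=0$. For $a$ and a non-negative integer $n$, $(a)_n$ denotes the rising factorial: $(a)_0:=1$ and $(a)_n:=a(a+1)\cdots(a+n-1)$ for $n>0$. An empty sum equals $0$. *)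

From HB Require Import structures.
From mathcomp Require Import all_boot all_order all_algebra.
Set Implicit Arguments. Unset Strict Implicit. Unset Printing Implicit Defensive.
Import Order.TTheory GRing.Theory Num.Theory.
Local Open Scope ring_scope.

Notation RatFun := {fraction {poly rat}}.

Definition xF : RatFun := FracField.tofrac 'X.

Definition cstF (c : rat) : RatFun := FracField.tofrac (c%:P).

Definition harm (i n : nat) : rat := \sum_(1 <= j < n.+1) ((j%:R : rat) ^+ i)^-1.

Definition rising (R : pzRingType) (a : R) (n : nat) : R :=
  \prod_(i < n) (a + i%:R).

From HB Require Import structures.
From mathcomp Require Import all_boot all_order all_algebra.
From mathcomp Require Import ring zify.
Set Implicit Arguments.
Unset Strict Implicit.
Unset Printing Implicit Defensive.

Import Order.TTheory GRing.Theory Num.Theory.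
Local Open Scope ring_scope.

(* Put f_n(x) = (1-x)_n / (x)_(n+1).  It has simple poles at x = 0, ..., -n with
   residues a_n(j) = (-1)^j C(n+j,j) C(n,j), so f_n(x) = sum_j a_n(j) / (x+j).
   The right-hand side is x f_n(x) f_m(x); multiplying the two expansions and
   splitting x / ((x+j)(x+k)) into partial fractions leaves the double poles
   1/(x+j) - j/(x+j)^2 at j = k and, at each pole -k, the sums
   S_n(k) = sum_(j <> k) a_n(j) / (j-k).  For k > n, S_n(k) = f_n(-k) is a
   quotient of rising factorials; for k <= n it is the derivative at -k of
   (x+k) f_n(x), i.e. -a_n(k) (H_(n+k) + H_(n-k) - 2 H_k), which is proved by
   induction on n from f_(n+1)(x) = f_n(x) (n+1-x)/(x+n+1) together with the
   corresponding expansion of sum_j a_n(j)/(x+j)^2 = -f_n'(x). *)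

Lemma prod_rising_fact (a n : nat) :
  (\prod_(i < n) (a.+1 + i) * a`! = (a + n)`!)%N.
Proof.
elim: n => [|n IH]; first by rewrite big_ord0 mul1n addn0.
by rewrite big_ord_recr /= mulnAC IH addnS factS mulnC.
Qed.

Lemma bin_pfcoef_rec n j : (j <= n)%N ->
  ('C(n.+1 + j, j) * 'C(n.+1, j) * (n.+1 - j) = 'C(n + j, j) * 'C(n, j) * (n.+1 + j))%N.
Proof.
move=> le_jn; apply/eqP; rewrite -(eqn_pmul2l (ltn0Sn n)); apply/eqP.
have e1 := mul_bin_down (n.+1 + j) j; rewrite addnK addSn /= in e1.
have e2 := mul_bin_down n.+1 j.
have -> : (n.+1 * ('C(n.+1 + j, j) * 'C(n.+1, j) * (n.+1 - j)) =
   (n.+1 * 'C((n + j).+1, j)) * ((n.+1 - j) * 'C(n.+1, j)))%N by rewrite addSn; ring.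
by rewrite -e1 -e2; ring.
Qed.

Lemma bin_Npole n t (k := (n.+1 + t)%N) :
  ('C(n + k, k) * \prod_(i < n.+1) (t.+1 + i) =
   k * \prod_(i < n) (k.+1 + i) * 'C(k.-1, n))%N.
Proof.
have e1 := prod_rising_fact k n.
have e2 := prod_rising_fact t n.+1; rewrite addnC -/k in e2.
have e3 := bin_fact (leq_addl n k); rewrite addnK in e3.
have e4 := bin_fact (leq_addr t n); rewrite addKn in e4.
have ek : k.-1 = (n + t)%N by rewrite /k addSn.
have fk : k`! = (k * (n + t)`!)%N by rewrite /k addSn factS.
rewrite ek; apply/eqP; rewrite -(eqn_pmul2r (fact_gt0 n)) -(eqn_pmul2r (fact_gt0 t))
  -(eqn_pmul2r (fact_gt0 k)); apply/eqP.
have -> : ('C(n + k, k) * \prod_(i < n.+1) (t.+1 + i) * n`! * t`! * k`!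
   = ('C(n + k, k) * (k`! * n`!)) * (\prod_(i < n.+1) (t.+1 + i) * t`!))%N by ring.
have -> : (k * \prod_(i < n) (k.+1 + i) * 'C(n + t, n) * n`! * t`! * k`!
   = (\prod_(i < n) (k.+1 + i) * k`!) * (k * ('C(n + t, n) * (n`! * t`!))))%N by ring.
by rewrite e3 e2 e1 e4 -fk addnC.
Qed.

Lemma bin_middleS n : 'C(n.+1 + n.+1, n.+1) = (2 * 'C(n + n.+1, n.+1))%N.
Proof.
have := @bin_sub (n + n.+1) n.+1 (leq_addl _ _); rewrite addnK => sym.
by rewrite addSn binS sym mul2n -addnn.
Qed.

Lemma rising_natS (R : pzRingType) (a n : nat) :
  rising (a.+1%:R : R) n = (\prod_(i < n) (a.+1 + i))%:R.
Proof. by rewrite /rising natr_prod; apply: eq_bigr => i _; rewrite natrD. Qed.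

Lemma rising_Nnat (R : comPzRingType) (n t : nat) :
  rising (- (n.+1 + t)%:R : R) n.+1 = (-1) ^+ n.+1 * (\prod_(i < n.+1) (t.+1 + i))%:R.
Proof.
rewrite /rising (reindex_inj rev_ord_inj) natr_prod.
rewrite -[in (-1) ^+ n.+1](card_ord n.+1) -prodrN.
apply: eq_bigr => i _ /=; rewrite subSS.
have -> : (n.+1 + t = t.+1 + i + (n - i))%N by have := ltn_ord i; lia.
by rewrite natrD; ring.
Qed.

Lemma risingS (R : pzRingType) (x : R) n : rising x n.+1 = rising x n * (x + n%:R).
Proof. by rewrite /rising big_ord_recr. Qed.

Section PartialFractions.

Variable K : fieldType.
Hypothesis K_char0 : forall n : nat, (n.+1%:R : K) != 0.

Lemma natr_neq0 (n : nat) : (0 < n)%N -> (n%:R : K) != 0.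
Proof. by case: n => // n _; apply: K_char0. Qed.

Lemma natrB_neq0 (j k : nat) : j != k -> (j%:R - k%:R : K) != 0.
Proof.
move=> ne_jk; case: (ltngtP j k) => [lt_jk|lt_kj|eq_jk].
- by rewrite -opprB -natrB ?oppr_eq0 ?natr_neq0 ?subn_gt0 // ltnW.
- by rewrite -natrB ?natr_neq0 ?subn_gt0 // ltnW.
- by rewrite eq_jk eqxx in ne_jk.
Qed.

Lemma Nnat_addn_neq0 (k i : nat) : (i < k)%N -> (- k%:R + i%:R : K) != 0.
Proof. by move=> lt_ik; rewrite addrC natrB_neq0 // neq_ltn lt_ik. Qed.

Definition pfcoef n j : K := (-1) ^+ j * ('C(n + j, j) * 'C(n, j))%:R.

Definition rising_quot n (x : K) : K := rising (1 - x) n / rising x n.+1.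

Lemma pfcoefS n j : (j <= n)%N ->
  pfcoef n.+1 j = pfcoef n j * (n.+1%:R + j%:R) / (n.+1%:R - j%:R).
Proof.
move=> le_jn; have nz : n.+1%:R - j%:R != 0 :> K by apply: natrB_neq0; lia.
apply: (canRL (mulfK nz)); rewrite /pfcoef -!mulrA; congr (_ * _).
by rewrite -natrB 1?ltnW // -natrD -!natrM bin_pfcoef_rec.
Qed.

Lemma pfcoefM n m k :
  pfcoef n k * pfcoef m k = ('C(m + k, k) * 'C(m, k) * 'C(n + k, k) * 'C(n, k))%:R.
Proof.
by rewrite /pfcoef mulrACA -exprMn mulrNN mulr1 expr1n mul1r -natrM mulnC mulnA.
Qed.

Lemma rising_quotS n x :
  rising_quot n.+1 x = rising_quot n x * ((n.+1%:R - x) / (x + n.+1%:R)).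
Proof.
rewrite /rising_quot !risingS invfM mulrACA; congr (_ * (_ / _)).
by rewrite -nat1r; ring.
Qed.

Lemma rising_quot_Npole n k : (n < k)%N ->
  k%:R * rising_quot n (- k%:R) = (-1) ^+ n.+1 * 'C(n + k, k)%:R / 'C(k.-1, n)%:R.
Proof.
move=> /subnK <-; set t := (k - n.+1)%N; rewrite addnC.
rewrite /rising_quot opprK nat1r rising_natS rising_Nnat invfM invr_sign.
have nzC : 'C((n.+1 + t).-1, n)%:R != 0 :> K by rewrite natr_neq0 // bin_gt0; lia.
have nzP : (\prod_(i < n.+1) (t.+1 + i))%:R != 0 :> K by rewrite natr_neq0 // prodn_gt0.
have := congr1 (GRing.natmul (1 : K)) (bin_Npole n t).
rewrite !natrM => /(canRL (mulfK nzP)) ->.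
by field; rewrite nzC nzP.
Qed.

Lemma pfcoef_diag n : pfcoef n.+1 n.+1 = 2%:R * n.+1%:R * rising_quot n (- n.+1%:R).
Proof.
rewrite -mulrA rising_quot_Npole //= binn divr1 /pfcoef binn muln1 bin_middleS natrM.
by rewrite mulrCA.
Qed.

Lemma rising_quot_pfd n x : (forall i, (i <= n)%N -> x + i%:R != 0) ->
  rising_quot n x = \sum_(j < n.+1) pfcoef n j / (x + j%:R).
Proof.
elim: n x => [|n IH] x x_pole.
  by rewrite /rising_quot /rising big_ord0 !big_ord1 /pfcoef /= expr0 !mul1r.
have x_poleS i : (i <= n)%N -> x + i%:R != 0 by move=> le_in; apply: x_pole; lia.
have N_pole i : (i <= n)%N -> - n.+1%:R + i%:R != 0 :> K by move=> ?; apply: Nnat_addn_neq0.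
rewrite rising_quotS (IH x x_poleS) mulr_suml [RHS]big_ord_recr /=.
rewrite pfcoef_diag (IH _ N_pole).
rewrite mulr_sumr mulr_suml -big_split /=; apply: eq_bigr => j _.
have le_jn : (j <= n)%N by rewrite -ltnS.
have := x_pole j (leqW le_jn); have := x_pole n.+1 (leqnn _).
have := N_pole j le_jn; have : n.+1%:R - j%:R != 0 :> K by apply: natrB_neq0; lia.
rewrite pfcoefS //; set a := pfcoef n j; set J := (j%:R : K) => h1 h2 h3 h4.
by field; rewrite nat1r h1 h2 h3 h4.
Qed.

(* The negated logarithmic derivative of [rising_quot n]. *)
Definition rising_quot_dlog n (x : K) : K :=
  \sum_(i < n.+1) (x + i%:R)^-1 + \sum_(i < n) (i.+1%:R - x)^-1.

Lemma rising_quot_dlogS n x :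
  rising_quot_dlog n.+1 x = rising_quot_dlog n x + (x + n.+1%:R)^-1 + (n.+1%:R - x)^-1.
Proof.
rewrite /rising_quot_dlog (big_ord_recr n.+1).
by rewrite (big_ord_recr n (fun i : 'I_n.+1 => (i.+1%:R - x)^-1)) /=; ring.
Qed.

Lemma rising_quot_pfd_sq n x :
  (forall i, (i <= n)%N -> x + i%:R != 0) -> (forall i, (i < n)%N -> i.+1%:R - x != 0) ->
  \sum_(j < n.+1) pfcoef n j / (x + j%:R) ^+ 2 = rising_quot n x * rising_quot_dlog n x.
Proof.
elim: n x => [|n IH] x x_pole x_zero.
  rewrite /rising_quot_dlog !big_ord1 big_ord0 /rising_quot /rising big_ord0 big_ord1.
  have := x_pole 0%N (leqnn 0); rewrite /pfcoef /= addr0 => nz.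
  by rewrite expr0 !mul1r addr0; field.
have x_poleS i : (i <= n)%N -> x + i%:R != 0 by move=> le_in; apply: x_pole; lia.
have x_zeroS i : (i < n)%N -> i.+1%:R - x != 0 by move=> lt_in; apply: x_zero; lia.
have N_pole i : (i <= n)%N -> - n.+1%:R + i%:R != 0 :> K by move=> ?; apply: Nnat_addn_neq0.
have h2 := x_pole n.+1 (leqnn _); have h5 := x_zero n (ltnSn _).
set N := (n.+1%:R : K) in h2 h5 N_pole *.
set r := (N - x) / (x + N); set c := 2%:R * N / (x + N) ^+ 2.
rewrite [LHS]big_ord_recr /= pfcoef_diag.
rewrite (eq_bigr (fun j : 'I_n.+1 => r * (pfcoef n j / (x + j%:R) ^+ 2) +
   (c * (pfcoef n j / (x + j%:R)) - c * (pfcoef n j / (- N + j%:R))))); last first.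
  move=> j _; have le_jn : (j <= n)%N by rewrite -ltnS.
  have := x_poleS j le_jn; have := N_pole j le_jn.
  have : N - j%:R != 0 by apply: natrB_neq0; lia.
  rewrite pfcoefS // /r /c /N; set a := pfcoef n j; set J := (j%:R : K) => h3 h4 h1.
  by field; rewrite nat1r h1 h2 h3 h4.
rewrite big_split /= -mulr_sumr sumrB -!mulr_sumr (IH x x_poleS x_zeroS).
rewrite -(rising_quot_pfd x_poleS) -(rising_quot_pfd N_pole) rising_quotS rising_quot_dlogS.
by rewrite /r /c; move: h2 h5; rewrite /N => h2 h5; field; rewrite nat1r h2 h5.
Qed.

Definition harmonic m : K := \sum_(i < m) (i.+1%:R)^-1.

Lemma harmonicS m : harmonic m.+1 = harmonic m + (m.+1%:R)^-1.
Proof. by rewrite /harmonic big_ord_recr. Qed.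

Lemma harmonicD a b : harmonic (a + b) = harmonic a + \sum_(i < b) ((a + i).+1%:R)^-1.
Proof. by rewrite /harmonic big_split_ord. Qed.

Lemma harmonic_Nnat n : \sum_(i < n.+1) (- n.+1%:R + i%:R)^-1 = - harmonic n.+1.
Proof.
rewrite /harmonic -sumrN (reindex_inj rev_ord_inj); apply: eq_bigr => i _ /=.
have -> : n.+1%:R = i.+1%:R + (n - i)%:R :> K by rewrite -natrD; congr _%:R; have := ltn_ord i; lia.
by rewrite subSS opprD addrNK invrN.
Qed.

Lemma sum_ord_neq (F : nat -> K) M k : (k < M)%N ->
  \sum_(j < M | (j : nat) != k) F j = \sum_(j < M) F j - F k.
Proof.
move=> lt_kM; rewrite [in RHS](bigD1 (Ordinal lt_kM)) //= addrAC subrr add0r.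
by apply: eq_bigl.
Qed.

Definition pfcoef_offsum n k : K :=
  \sum_(j < n.+1 | (j : nat) != k) pfcoef n j / (j%:R - k%:R).

Lemma pfcoef_offsum_diag n : pfcoef_offsum n.+1 n.+1 =
  - pfcoef n.+1 n.+1 * (harmonic (n.+1 + n.+1) + harmonic (n.+1 - n.+1) - 2%:R * harmonic n.+1).
Proof.
have N_pole i : (i <= n)%N -> - n.+1%:R + i%:R != 0 :> K by move=> ?; apply: Nnat_addn_neq0.
have N_zero i : (i < n)%N -> i.+1%:R - - n.+1%:R != 0 :> K by move=> _; rewrite opprK -natrD addnS.
rewrite /pfcoef_offsum big_mkcond big_ord_recr /= eqxx addr0.
rewrite (eq_bigr (fun j : 'I_n.+1 => - (2%:R * n.+1%:R) * (pfcoef n j / (- n.+1%:R + j%:R) ^+ 2)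
     - pfcoef n j / (- n.+1%:R + j%:R))); last first.
  move=> j _; have le_jn : (j <= n)%N by rewrite -ltnS.
  rewrite neq_ltn ltnS le_jn /=.
  have := N_pole j le_jn; have : n.+1%:R - j%:R != 0 :> K by apply: natrB_neq0; lia.
  rewrite pfcoefS //; set a := pfcoef n j; set J := (j%:R : K) => h3 h4.
  by field; rewrite nat1r h3 h4.
rewrite sumrB -mulr_sumr (rising_quot_pfd_sq N_pole N_zero) -(rising_quot_pfd N_pole).
rewrite pfcoef_diag /rising_quot_dlog harmonic_Nnat subnn addnS.
rewrite (harmonicS (n.+1 + n)) harmonicD.
have -> : \sum_(i < n) (i.+1%:R - - (n.+1%:R : K))^-1 = \sum_(i < n) ((n.+1 + i).+1%:R)^-1.
  by apply: eq_bigr => i _; rewrite opprK -natrD addnC addnS.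
have -> : ((n.+1 + n).+1%:R : K) = 2%:R * n.+1%:R by rewrite -natrM; congr (_%:R); lia.
by rewrite /harmonic big_ord0; field; rewrite nat1r K_char0 (K_char0 1).
Qed.

Lemma pfcoef_offsumS n k : (k <= n)%N ->
  pfcoef_offsum n k = - pfcoef n k * (harmonic (n + k) + harmonic (n - k) - 2%:R * harmonic k) ->
  pfcoef_offsum n.+1 k =
    - pfcoef n.+1 k * (harmonic (n.+1 + k) + harmonic (n.+1 - k) - 2%:R * harmonic k).
Proof.
move=> le_kn IHk.
have N_pole i : (i <= n)%N -> - n.+1%:R + i%:R != 0 :> K by move=> ?; apply: Nnat_addn_neq0.
have nz_Nk : n.+1%:R - k%:R != 0 :> K by apply: natrB_neq0; lia.
have ne_Nk : n.+1 != k by rewrite neq_ltn ltnS le_kn orbT.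
rewrite /pfcoef_offsum big_mkcond big_ord_recr /= ne_Nk pfcoef_diag.
rewrite (eq_bigr (fun j : 'I_n.+1 =>
   (n.+1%:R + k%:R) / (n.+1%:R - k%:R) *
     (if (j : nat) != k then pfcoef n j / (j%:R - k%:R) else 0)
   - 2%:R * n.+1%:R / (n.+1%:R - k%:R) *
     (if (j : nat) != k then pfcoef n j / (- n.+1%:R + j%:R) else 0))); last first.
  move=> j _; have le_jn : (j <= n)%N by rewrite -ltnS.
  have [->|ne_jk] /= := eqVneq (j : nat) k; first by rewrite !mulr0 subrr.
  have := N_pole j le_jn; have : n.+1%:R - j%:R != 0 :> K by apply: natrB_neq0; lia.
  have : j%:R - k%:R != 0 :> K by apply: natrB_neq0.
  rewrite pfcoefS //; set a := pfcoef n j; set J := (j%:R : K) => h5 h3 h4.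
  by field; rewrite nat1r h3 h4 h5 nz_Nk.
rewrite sumrB -!mulr_sumr -!big_mkcond -/(pfcoef_offsum n k) IHk.
rewrite (sum_ord_neq (fun j => pfcoef n j / (- n.+1%:R + j%:R))) //.
rewrite -(rising_quot_pfd N_pole) addSn subSn // !harmonicS pfcoefS //.
rewrite -addSn natrD -subSn // natrB 1?ltnW //.
have := N_pole k le_kn; have : n.+1%:R + k%:R != 0 :> K by rewrite -natrD addSn.
set a := pfcoef n k; set Kk := (k%:R : K); set N := (n.+1%:R : K) => h6 h4.
by field; rewrite nat1r h4 h6 nz_Nk.
Qed.

Lemma pfcoef_offsumE n k : (k <= n)%N ->
  pfcoef_offsum n k = - pfcoef n k * (harmonic (n + k) + harmonic (n - k) - 2%:R * harmonic k).
Proof.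
elim: n k => [|n IH] k le_kn.
  move: le_kn; rewrite leqn0 => /eqP ->.
  by rewrite /pfcoef_offsum big_mkcond big_ord1 /harmonic big_ord0 /=; ring.
have [->|le_kn'] : k = n.+1 \/ (k <= n)%N by lia.
  exact: pfcoef_offsum_diag.
exact: pfcoef_offsumS (IH k le_kn').
Qed.

Lemma pfcoef_offsum_Npole n k : (n < k)%N -> pfcoef_offsum n k = rising_quot n (- k%:R).
Proof.
move=> lt_nk; have k_pole i : (i <= n)%N -> - k%:R + i%:R != 0 :> K.
  by move=> le_in; apply: Nnat_addn_neq0; lia.
rewrite (rising_quot_pfd k_pole) /pfcoef_offsum (eq_bigl xpredT) => [|j].
  by apply: eq_bigr => j _; rewrite addrC.
by rewrite neq_ltn (leq_trans (ltn_ord j)).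
Qed.

Lemma mul_pfrac_pair (x a b : K) (j k : nat) : x + j%:R != 0 -> x + k%:R != 0 ->
  x * (a / (x + j%:R)) * (b / (x + k%:R)) =
    (if j == k then a * b * ((x + j%:R)^-1 - j%:R / (x + j%:R) ^+ 2) else 0)
  + (- j%:R * a / (x + j%:R)) * (if k != j then b / (k%:R - j%:R) else 0)
  + (- k%:R * b / (x + k%:R)) * (if j != k then a / (j%:R - k%:R) else 0).
Proof.
have [<- /= nz_j _|ne_jk nz_j nz_k] := eqVneq j k; first by field.
have nz_jk := natrB_neq0 ne_jk; rewrite eq_sym in ne_jk; have nz_kj := natrB_neq0 ne_jk.
move: nz_j nz_k nz_jk nz_kj => /=; set J := (j%:R : K); set Kk := (k%:R : K).
by move=> nz_j nz_k nz_jk nz_kj; field; rewrite nz_j nz_k nz_kj nz_jk.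
Qed.

Lemma rising_quot_mul_pfd n m x : (n <= m)%N ->
  (forall i, (i <= m)%N -> x + i%:R != 0) ->
  x * rising_quot n x * rising_quot m x =
    \sum_(j < n.+1) pfcoef n j * pfcoef m j * ((x + j%:R)^-1 - j%:R / (x + j%:R) ^+ 2)
  + \sum_(j < n.+1) (- j%:R * pfcoef n j / (x + j%:R)) * pfcoef_offsum m j
  + \sum_(k < m.+1) (- k%:R * pfcoef m k / (x + k%:R)) * pfcoef_offsum n k.
Proof.
rewrite -ltnS => le_nm x_pole; have x_pole_n i : (i <= n)%N -> x + i%:R != 0.
  by move=> le_in; apply: x_pole; lia.
rewrite (rising_quot_pfd x_pole_n) (rising_quot_pfd x_pole) [x * _]mulr_sumr mulr_suml.
under eq_bigr => j _.
  rewrite mulr_sumr; under eq_bigr => k _ do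
    rewrite (mul_pfrac_pair _ _ (x_pole_n j (ltn_ord j)) (x_pole k (ltn_ord k))).
  rewrite !big_split /= -!mulr_sumr -big_mkcond /=.
  over.
rewrite !big_split /= exchange_big /=; congr (_ + _ + _).
- by apply: eq_bigr => j _; rewrite (big_pred1 (widen_ord le_nm j)).
- by apply: eq_bigr => j _; rewrite -big_mkcond.
- by apply: eq_bigr => k _; rewrite -mulr_sumr -big_mkcond.
Qed.

Lemma pfd_low_pole m n k (x : K) : (n <= m)%N -> (k <= n)%N -> x + k%:R != 0 ->
  pfcoef n k * pfcoef m k *
    (- k%:R / (x + k%:R) ^+ 2
     + (1 + k%:R * (harmonic (m + k) + harmonic (m - k) + harmonic (n + k)
                    + harmonic (n - k) - 4%:R * harmonic k)) / (x + k%:R))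
  = pfcoef n k * pfcoef m k * ((x + k%:R)^-1 - k%:R / (x + k%:R) ^+ 2)
  + (- k%:R * pfcoef n k / (x + k%:R)) * pfcoef_offsum m k
  + (- k%:R * pfcoef m k / (x + k%:R)) * pfcoef_offsum n k.
Proof.
move=> le_nm le_kn nz_xk.
rewrite !pfcoef_offsumE ?(leq_trans le_kn) //.
by move: nz_xk; set X := x + _ => nz_X; field.
Qed.

Lemma pfd_high_pole m n k (x : K) : (n < k)%N -> x + k%:R != 0 ->
  (-1) ^+ (k - n) * ('C(m + k, k) * 'C(m, k) * 'C(n + k, k))%:R / 'C(k.-1, n)%:R
    / (x + k%:R)
  = (- k%:R * pfcoef m k / (x + k%:R)) * pfcoef_offsum n k.
Proof.
move=> lt_nk nz_xk.
have nz_k : k%:R != 0 :> K by apply: natr_neq0; lia.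
have nz_C : 'C(k.-1, n)%:R != 0 :> K by rewrite natr_neq0 // bin_gt0; lia.
have sign2 : (-1) ^+ n * (-1) ^+ n = 1 :> K by rewrite -exprD addnn -mul2n exprM sqrrN !expr1n.
have sign_k : (-1) ^+ k = (-1) ^+ (k - n) * (-1) ^+ n :> K by rewrite -exprD subnK // ltnW.
rewrite pfcoef_offsum_Npole //.
have -> : rising_quot n (- k%:R) = (-1) ^+ n.+1 * 'C(n + k, k)%:R / 'C(k.-1, n)%:R / k%:R.
  by rewrite -rising_quot_Npole // mulrC mulKf.
(* [field] cannot use that (-1)^n squares to 1, so that factor is inserted by hand. *)
rewrite /pfcoef sign_k exprS !natrM -[LHS]mulr1 -[X in _ * X = _]sign2.
by field; rewrite nz_xk nz_k nz_C.
Qed.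

End PartialFractions.

HB.instance Definition _ := GRing.RMorphism.copy cstF (@FracField.tofrac {poly rat} \o polyC).

Lemma RatFun_char0 (n : nat) : (n.+1%:R : RatFun) != 0.
Proof. by rewrite -(rmorph_nat cstF) fmorph_eq0 pnatr_eq0. Qed.

Lemma xF_addn_neq0 (k : nat) : xF + k%:R != 0.
Proof.
by rewrite -(rmorph_nat cstF) /xF /cstF -rmorphD tofrac_eq0 -size_poly_eq0 size_XaddC.
Qed.

Lemma cstF_harm (j : nat) : cstF (harm 1 j) = harmonic RatFun j.
Proof.
rewrite /harm big_add1 /= big_mkord rmorph_sum; apply: eq_bigr => i _.
by rewrite expr1 fmorphV rmorph_nat.
Qed.

Theorem theorem2p1 (m n : nat) (hn : (0 < n)%N) (hnm : (n <= m)%N) :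
  \sum_(0 <= k < n.+1)
     cstF ((('C(m + k, k) * 'C(m, k) * 'C(n + k, k) * 'C(n, k))%N)%:R) *
     ( - (k%:R) / (xF + k%:R) ^+ 2
       + cstF (1 + k%:R * (harm 1 (m + k) + harm 1 (m - k) + harm 1 (n + k)
                            + harm 1 (n - k) - 4%:R * harm 1 k))
         / (xF + k%:R))
  + \sum_(n.+1 <= k < m.+1)
     cstF ((-1) ^+ (k - n) * (('C(m + k, k) * 'C(m, k) * 'C(n + k, k))%N)%:R
           / ('C(k.-1, n))%:R) / (xF + k%:R)
  = xF * rising (1 - xF) n * rising (1 - xF) m
    / (rising xF n.+1 * rising xF m.+1).
Proof.
have x_pole i : (i <= m)%N -> xF + i%:R != 0 by move=> _; apply: xF_addn_neq0.
have -> : xF * rising (1 - xF) n * rising (1 - xF) m / (rising xF n.+1 * rising xF m.+1)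
    = xF * rising_quot n xF * rising_quot m xF by rewrite /rising_quot invfM; ring.
rewrite (rising_quot_mul_pfd RatFun_char0 hnm x_pole) -addrA.
rewrite -(big_mkord xpredT
  (fun k => - k%:R * pfcoef RatFun m k / (xF + k%:R) * pfcoef_offsum RatFun n k)).
rewrite [in RHS](big_cat_nat (leq0n n.+1) (hnm : n.+1 <= m.+1)%N) big_mkord big_mkord.
rewrite !addrA -!big_split; congr (_ + _).
  apply: eq_bigr => k _ /=; have le_kn : (k <= n)%N by rewrite -ltnS.
  rewrite -(pfd_low_pole RatFun_char0 hnm le_kn (xF_addn_neq0 k)).
  rewrite rmorph_nat -pfcoefM -!cstF_harm.
  by rewrite !(rmorphD, rmorphN, rmorphM, rmorph_nat, rmorph1).
apply: eq_big_nat => k /andP[lt_nk _].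
rewrite -(pfd_high_pole RatFun_char0 m lt_nk (xF_addn_neq0 k)).
by rewrite !(rmorphM, rmorphXn, rmorphN1, fmorphV, rmorph_nat).
Qed.
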